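(* Let $Y$ be a finite-dimensional real or complex vector space, let $\mathfrak g\subset\mathfrak{gl}(Y)$ be a Lie subalgebra (with bracket $[S,T]=ST-TS$, acting on $Y$ by $y\mapsto Ty$), and let $\omega$ be a bilinear form on $Y$ with $\omega(Tx,y)+\omega(x,Ty)=0$ for all $T\in\mathfrak g$, $x,y\in Y$. Define $F\colon Y\to\mathfrak g^*$ by $\langle F(y),T\rangle=\tfrac12\omega(Ty,y)$. Let $\alpha\colon\mathfrak g^*\to\mathfrak g$ and $f(y)=\alpha(F(y))y$. For $T\in\mathfrak g$ define $\beta(T)\colon\mathfrak g^*\to\mathfrak g^*$ by $\langle\beta(T)z,S\rangle=\langle z,[S,T]\rangle$ for all $S\in\mathfrak g$. Then $f$ is $F$-related to $g(z)=\beta(\alpha(z))z=-\operatorname{ad}^*_{\alpha(z)}z$, i.e. $F'(y)f(y)=g(F(y))$ for all $y\in Y$. Additionally, if $\mathfrak g$ is closed under $(S,T)\mapsto U_TS:=TST$, then $F''(f(y),f(y))=\gamma(F(y))$ for all $y\in Y$, where $\gamma(z)\in\mathfrak g^*$ is given by $\langle\gamma(z),S\rangle=-2\langle z,\alpha(z)S\alpha(z)\rangle$ for all $S\in\mathfrak g$, i.e. $\gamma(z)=-2U^*_{\alpha(z)}z$.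
   Context: $\langle\cdot,\cdot\rangle$ is the pairing between $\mathfrak g^*$ and $\mathfrak g$. $\operatorname{ad}^*_Tz$ is defined by $\langle\operatorname{ad}^*_Tz,S\rangle=\langle z,[T,S]\rangle$, and $U^*_Tz$ by $\langle U^*_Tz,S\rangle=\langle z,TST\rangle$. $F''$ denotes the constant symmetric bilinear second derivative of the quadratic map $F$. *)

From HB Require Import structures.
From mathcomp Require Import all_boot all_order all_algebra.
From mathcomp Require Import all_classical all_reals all_analysis.
Set Implicit Arguments. Unset Strict Implicit. Unset Printing Implicit Defensive.
Import Order.TTheory GRing.Theory Num.Theory.
Import numFieldNormedType.Exports.
Local Open Scope ring_scope.

Section Defs.
Variables (K : numFieldType) (n : nat).

(* Y = 'cV[K]_n, gl(Y) = 'M[K]_n acting by y |-> T *m y. *)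

Definition bilinear_form (omega : 'cV[K]_n -> 'cV[K]_n -> K) : Prop :=
  (forall (a : K) x x' y, omega (a *: x + x') y = a * omega x y + omega x' y) /\
  (forall (a : K) x y y', omega x (a *: y + y') = a * omega x y + omega x y').

Definition lie_br (S T : 'M[K]_n) : 'M[K]_n := S *m T - T *m S.

Definition lie_subalgebra (g : {vspace 'M[K]_n}) : Prop :=
  forall S T, S \in g -> T \in g -> lie_br S T \in g.

Definition dual (g : {vspace 'M[K]_n}) := 'Hom(subvs_of g, K^o).

(* pairing <z, M> for z in g^* and M in g (M is projected onto g,
   which is the identity on elements of g) *)
Definition pair (g : {vspace 'M[K]_n}) (z : dual g) (M : 'M[K]_n) : K :=
  z (vsproj g M).

Definition Fmap (g : {vspace 'M[K]_n}) (omega : 'cV[K]_n -> 'cV[K]_n -> K)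
  (y : 'cV[K]_n) : dual g :=
  linfun (fun T : subvs_of g => (2%:R)^-1 * omega (vsval T *m y) y : K^o).

Definition fvec (g : {vspace 'M[K]_n}) (omega : 'cV[K]_n -> 'cV[K]_n -> K)
  (alpha : dual g -> subvs_of g) (y : 'cV[K]_n) : 'cV[K]_n :=
  vsval (alpha (Fmap g omega y)) *m y.

Definition beta (g : {vspace 'M[K]_n}) (T : 'M[K]_n) (z : dual g) : dual g :=
  linfun (fun S : subvs_of g => pair z (lie_br (vsval S) T) : K^o).

Definition gvec (g : {vspace 'M[K]_n}) (alpha : dual g -> subvs_of g)
  (z : dual g) : dual g := beta (vsval (alpha z)) z.

Definition gamma (g : {vspace 'M[K]_n}) (alpha : dual g -> subvs_of g)
  (z : dual g) : dual g :=
  linfun (fun S : subvs_of g =>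
    - (2%:R) * pair z (vsval (alpha z) *m vsval S *m vsval (alpha z)) : K^o).

Definition DF (g : {vspace 'M[K]_n}) (omega : 'cV[K]_n -> 'cV[K]_n -> K)
  (y v : 'cV[K]_n) (T : subvs_of g) : K :=
  derive1 (fun t : K => Fmap g omega (y + t *: v) T : K) 0.

(* (constant) second derivative:
   <F''(u,v), T> = d/ds d/dt <F(s u + t v), T> at s = t = 0 *)
Definition D2F (g : {vspace 'M[K]_n}) (omega : 'cV[K]_n -> 'cV[K]_n -> K)
  (u v : 'cV[K]_n) (T : subvs_of g) : K :=
  derive1 (fun s : K =>
    derive1 (fun t : K => Fmap g omega (s *: u + t *: v) T : K) 0) 0.

End Defs.

(** Along the line [y + t v] the moment map is a quadratic polynomial in [t],
    so both derivatives are read off from the polarisation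
    [½ (omega (S v) y + omega (S y) v)].  For [v = A y] with [A = alpha (F y)]
    the invariance of [omega] under [A] moves [A] across the form: the first
    derivative becomes [½ omega ([S, A] y) y = <F y, [S, A]>] and the second
    [omega (S A y) (A y) = - omega (A S A y) y = -2 <F y, A S A>]. *)
From HB Require Import structures.
From mathcomp Require Import all_boot all_order all_algebra.
From mathcomp Require Import all_classical all_reals all_analysis.
From mathcomp Require Import ring.
Import Order.TTheory GRing.Theory Num.Theory.
Import numFieldNormedType.Exports.
Local Open Scope ring_scope.

Lemma derive1_quadratic_at0 (K : numFieldType) (a b c : K) :
  derive1 (fun t : K => a + t * b + t ^+ 2 * c) 0 = b.
Proof.
rewrite derive1E.
have -> : (fun t : K => a + t * b + t ^+ 2 * c) =
          cst a + id * cst b + (id * id) * cst c.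
  by apply/funext => t /=; rewrite expr2.
rewrite derive_val /=.
by rewrite !(scaler0, scale0r, addr0, add0r, mulr0) [b%:A]mulr1.
Qed.

Lemma linfunE_linear (K : fieldType) (aT rT : vectType K) (f : aT -> rT) :
  linear f -> linfun f =1 f.
Proof.
move=> f_lin x.
pose F : {linear aT -> rT} := HB.pack f (GRing.isLinear.Build K aT rT *:%R f f_lin).
exact: (lfunE F x).
Qed.

Section CoadjointFields.
Variables (K : numFieldType) (n : nat) (g : {vspace 'M[K]_n}).
Variable alpha : dual g -> subvs_of g.

Lemma pairP (z : dual g) a M M' : pair z (a *: M + M') = a * pair z M + pair z M'.
Proof. by rewrite /pair !linearP. Qed.

Lemma gvecE z (S : subvs_of g) :
  gvec alpha z S = pair z (lie_br (vsval S) (vsval (alpha z))).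
Proof.
rewrite /gvec /beta linfunE_linear // => a T1 T2 /=.
by rewrite -pairP /lie_br linearP /= scalerBr opprD addrACA mulmxDl -scalemxAl.
Qed.

Lemma gammaE z (S : subvs_of g) :
  gamma alpha z S = - 2%:R * pair z (vsval (alpha z) *m vsval S *m vsval (alpha z)).
Proof.
rewrite /gamma linfunE_linear // => a T1 T2 /=.
rewrite linearP /= mulmxDl -scalemxAl pairP /GRing.scale /=.
ring.
Qed.

End CoadjointFields.

Section BilinearForm.
Variables (K : numFieldType) (n : nat) (omega : 'cV[K]_n -> 'cV[K]_n -> K).
Hypothesis omega_bilinear : bilinear_form omega.

Lemma bilinear_form0l y : omega 0 y = 0.
Proof.
have := (proj1 omega_bilinear) (-1) 0 0 y.
by rewrite scaler0 addr0 mulN1r addNr.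
Qed.

Lemma bilinear_form0r x : omega x 0 = 0.
Proof.
have := (proj2 omega_bilinear) (-1) x 0 0.
by rewrite scaler0 addr0 mulN1r addNr.
Qed.

Lemma bilinear_formDl x x' y : omega (x + x') y = omega x y + omega x' y.
Proof. by have := (proj1 omega_bilinear) 1 x x' y; rewrite scale1r mul1r. Qed.

Lemma bilinear_formDr x y y' : omega x (y + y') = omega x y + omega x y'.
Proof. by have := (proj2 omega_bilinear) 1 x y y'; rewrite scale1r mul1r. Qed.

Lemma bilinear_formZl a x y : omega (a *: x) y = a * omega x y.
Proof.
by have := (proj1 omega_bilinear) a x 0 y; rewrite addr0 bilinear_form0l addr0.
Qed.

Lemma bilinear_formZr a x y : omega x (a *: y) = a * omega x y.
Proof.
by have := (proj2 omega_bilinear) a x y 0; rewrite addr0 bilinear_form0r addr0.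
Qed.

Lemma bilinear_formNl x y : omega (- x) y = - omega x y.
Proof. by rewrite -scaleN1r bilinear_formZl mulN1r. Qed.

Lemma bilinear_form_mulmx_line (M : 'M[K]_n) x v t :
  omega (M *m (x + t *: v)) (x + t *: v) =
  omega (M *m x) x + t * (omega (M *m v) x + omega (M *m x) v)
  + t ^+ 2 * omega (M *m v) v.
Proof.
rewrite mulmxDr -scalemxAr.
rewrite !bilinear_formDl !bilinear_formDr !bilinear_formZl !bilinear_formZr.
ring.
Qed.

Variable g : {vspace 'M[K]_n}.

Lemma FmapE y (T : subvs_of g) :
  Fmap g omega y T = 2%:R^-1 * omega (vsval T *m y) y.
Proof.
rewrite /Fmap linfunE_linear // => a T1 T2 /=.
rewrite mulmxDl -scalemxAl bilinear_formDl bilinear_formZl /GRing.scale /=.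
ring.
Qed.

Lemma pair_Fmap y M : M \in g -> pair (Fmap g omega y) M = 2%:R^-1 * omega (M *m y) y.
Proof. by move=> gM; rewrite /pair FmapE vsprojK. Qed.

Definition Fmap_polar y v (S : subvs_of g) : K :=
  2%:R^-1 * (omega (vsval S *m v) y + omega (vsval S *m y) v).

Lemma Fmap_line y v (S : subvs_of g) :
  (fun t => Fmap g omega (y + t *: v) S) =
  (fun t => Fmap g omega y S + t * Fmap_polar y v S + t ^+ 2 * Fmap g omega v S).
Proof.
apply/funext => t; rewrite !FmapE /Fmap_polar bilinear_form_mulmx_line.
ring.
Qed.

Lemma DFE y v (S : subvs_of g) : DF omega y v S = Fmap_polar y v S.
Proof. by rewrite /DF Fmap_line derive1_quadratic_at0. Qed.

Lemma D2FE u v (S : subvs_of g) : D2F omega u v S = Fmap_polar u v S.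
Proof.
rewrite /D2F; under eq_fun => s do rewrite Fmap_line derive1_quadratic_at0.
have -> : (fun s => Fmap_polar (s *: u) v S) =
          (fun s => 0 + s * Fmap_polar u v S + s ^+ 2 * 0).
  apply/funext => s; rewrite /Fmap_polar -scalemxAr.
  rewrite bilinear_formZl bilinear_formZr; ring.
exact: derive1_quadratic_at0.
Qed.

End BilinearForm.

Section InvariantForm.
Variables (K : numFieldType) (n : nat) (g : {vspace 'M[K]_n}).
Variables (omega : 'cV[K]_n -> 'cV[K]_n -> K) (alpha : dual g -> subvs_of g).
Hypothesis omega_bilinear : bilinear_form omega.
Hypothesis omega_invariant :
  forall T x y, T \in g -> omega (T *m x) y + omega x (T *m y) = 0.

Lemma invariant_form_swap T x y : T \in g -> omega x (T *m y) = - omega (T *m x) y.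
Proof. by move=> gT; apply/eqP; rewrite -addr_eq0 addrC omega_invariant. Qed.

Lemma DF_fvec : lie_subalgebra g -> forall y (S : subvs_of g),
  DF omega y (fvec omega alpha y) S = gvec alpha (Fmap g omega y) S.
Proof.
move=> g_lie y S; rewrite DFE // gvecE /fvec.
set A := vsval (alpha _).
have gSA : lie_br (vsval S) A \in g by apply: g_lie; apply: subvsP.
rewrite (pair_Fmap _ _ _ omega_bilinear _ _ _ gSA).
rewrite /Fmap_polar invariant_form_swap ?subvsP // /lie_br mulmxBl.
by rewrite bilinear_formDl // bilinear_formNl // !mulmxA.
Qed.

Lemma D2F_fvec : (forall S T, S \in g -> T \in g -> T *m S *m T \in g) ->
  forall y (S : subvs_of g),
  D2F omega (fvec omega alpha y) (fvec omega alpha y) S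
  = gamma alpha (Fmap g omega y) S.
Proof.
move=> g_U y S; rewrite D2FE // gammaE /fvec /Fmap_polar.
set A := vsval (alpha _).
have gASA : A *m vsval S *m A \in g by apply: g_U; apply: subvsP.
rewrite (pair_Fmap _ _ _ omega_bilinear _ _ _ gASA).
rewrite [omega _ (A *m y)]invariant_form_swap ?subvsP // !mulmxA.
by field.
Qed.

End InvariantForm.

Theorem theorem3p8 (K : numFieldType) (n : nat)
  (g : {vspace 'M[K]_n}) (omega : 'cV[K]_n -> 'cV[K]_n -> K)
  (alpha : dual g -> subvs_of g) :
  lie_subalgebra g ->
  bilinear_form omega ->
  (forall T x y, T \in g -> omega (T *m x) y + omega x (T *m y) = 0) ->
  (forall (y : 'cV[K]_n) (S : subvs_of g),
      DF omega y (fvec omega alpha y) S = gvec alpha (Fmap g omega y) S) /\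
  ((forall S T, S \in g -> T \in g -> T *m S *m T \in g) ->
   forall (y : 'cV[K]_n) (S : subvs_of g),
      D2F omega (fvec omega alpha y) (fvec omega alpha y) S
      = gamma alpha (Fmap g omega y) S).
Proof.
move=> g_lie omega_bilinear omega_invariant.
by split; [exact: DF_fvec | exact: D2F_fvec].
Qed.
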